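(* Let $(\mathbb{R}^d,H,\mathcal{L})$ be a cut-and-project scheme such that $\mathcal{L}$ and $\mathcal{L}^\circ$ are both countable. Let $D$ be a lattice in $\mathbb{R}^d$ such that $D\cap\pi^G(\mathcal{L})=\{0\}$ and $D^\circ\cap\pi^{\widehat G}(\mathcal{L}^\circ)=\{0\}$. Let $\mathbb{K}=\mathbb{R}^d/D$ with quotient map $\psi:\mathbb{R}^d\to\mathbb{K}$. Then: (a) $\psi$ is injective on $\pi^G(\mathcal{L})$, and $\psi(\pi^G(\mathcal{L}))$ is dense in $\mathbb{K}$; (b) for every non-empty open set $U\subseteq H$ the set $\psi(\Lambda_U)$ is dense in $\mathbb{K}$.
   Context: $G=\mathbb{R}^d$. A cut-and-project scheme $(G,H,\mathcal{L})$ consists of locally compact abelian groups $G,H$ and a discrete cocompact subgroup $\mathcal{L}\subseteq G\times H$ such that $\pi^G|_{\mathcal{L}}$ is injective and $\pi^H(\mathcal{L})$ is dense in $H$; $\Lambda_U=\pi^G(\mathcal{L}\cap(G\times U))$. The dual group $\widehat G$ of $\mathbb{R}^d$ is identified with $\mathbb{R}^d$ via $x\mapsto(y\mapsto e^{2\pi i\langle x,y\rangle})$; $\mathcal{L}^\circ=\{(\chi,\eta)\in\widehat G\times\widehat H:\chi(g)\eta(h)=1\text{ for all }(g,h)\in\mathcal L\}$ is the annihilator of $\mathcal L$, and $\pi^{\widehat G}$ is the projection to $\widehat G$. For a lattice $D\subseteq\mathbb R^d$, $D^\circ=\{x\in\mathbb{R}^d:\langle y,x\rangle\in\mathbb{Z}\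 \forall y\in D\}$. *)

From HB Require Import structures.
From mathcomp Require Import all_boot all_order all_algebra.
From mathcomp Require Import all_classical all_reals all_analysis.
From mathcomp Require Import complex generic_quotient.
Set Implicit Arguments.
Unset Strict Implicit.
Unset Printing Implicit Defensive.
Import Order.TTheory GRing.Theory Num.Theory.
Import numFieldNormedType.Exports.
Local Open Scope classical_set_scope.
Local Open Scope ring_scope.
Local Open Scope quotient_scope.

Section Defs.
Variable R : realType.
Variable d : nat.

(* G = R^d as row vectors *)
Definition inner (x y : 'rV[R]_d) : R := \sum_(i < d) x 0 i * y 0 i.

Definition expi (t : R) : R[i] :=
  Complex (cos (2 * trigo.pi * t)) (sin (2 * trigo.pi * t)).

Definition charG (x y : 'rV[R]_d) : R[i] := expi (inner x y).

Section CPS.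
Variable H : topologicalZmodType.

Definition LCA_group : Prop :=
  hausdorff_space H /\ locally_compact [set: H].

Definition subgroup (L : set ('rV[R]_d * H)) : Prop :=
  L 0 /\ (forall a b, L a -> L b -> L (a - b)).

Definition discrete_subset (L : set ('rV[R]_d * H)) : Prop :=
  forall l, L l -> exists V, nbhs l V /\ V `&` L = [set l].

Definition cocompact (L : set ('rV[R]_d * H)) : Prop :=
  exists K : set ('rV[R]_d * H), compact K /\
    forall z, exists k l, K k /\ L l /\ z = k + l.

Definition cut_and_project_scheme (L : set ('rV[R]_d * H)) : Prop :=
  [/\ LCA_group, subgroup L, discrete_subset L, cocompact L
    & ((forall a b, L a -> L b -> a.1 = b.1 -> a = b) /\
       dense [set h | exists l, L l /\ l.2 = h])].

Definition model_set (L : set ('rV[R]_d * H)) (U : set H) : set 'rV[R]_d :=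
  [set g | exists l, L l /\ U l.2 /\ l.1 = g].

Definition proj_G (L : set ('rV[R]_d * H)) : set 'rV[R]_d :=
  [set g | exists l, L l /\ l.1 = g].

(* continuous characters of H : continuous homomorphisms into the unit
   circle of C = R[i]; C carries its usual (product = euclidean) topology,
   i.e. continuity of h |-> (Re, Im). *)
Definition character (eta : H -> R[i]) : Prop :=
  [/\ continuous (fun h => (complex.Re (eta h), complex.Im (eta h))),
      (forall h, `|eta h| = 1) &
      (forall a b, eta (a + b) = eta a * eta b)].

(* the annihilator L° in \hat G x \hat H, with \hat G identified with R^d *)
Definition annihilator (L : set ('rV[R]_d * H)) : set ('rV[R]_d * (H -> R[i])) :=
  [set p | character p.2 /\ forall l, L l -> charG p.1 l.1 * p.2 l.2 = 1].

Definition proj_dualG (L : set ('rV[R]_d * H)) : set 'rV[R]_d :=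
  [set x | exists eta, annihilator L (x, eta)].

End CPS.

Definition lattice_of (B : 'M[R]_d) : set 'rV[R]_d :=
  [set v | exists k : 'rV[R]_d, (forall i, k 0 i \is a Num.int) /\ v = k *m B].

Definition dual_lattice (D : set 'rV[R]_d) : set 'rV[R]_d :=
  [set x | forall y, D y -> inner y x \is a Num.int].

Definition lat_rel (B : 'M[R]_d) (x y : 'rV[R]_d) : bool :=
  `[< lattice_of B (x - y) >].

Lemma lat_rel_equiv (B : 'M[R]_d) : equiv_class_of (lat_rel B).
Proof.
rewrite /lat_rel; split.
- move=> x; apply/asboolP; exists 0; rewrite subrr mul0mx; split=> // i.
  by rewrite mxE.
- move=> x y; apply/asboolP/asboolP => -[k [kZ Hk]]; exists (- k); split.
  + by move=> i; rewrite !mxE rpredN.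
  + by rewrite mulNmx -Hk opprB.
  + by move=> i; rewrite !mxE rpredN.
  + by rewrite mulNmx -Hk opprB.
- move=> y x z /asboolP [k [kZ Hk]] /asboolP [k' [k'Z Hk']].
  apply/asboolP; exists (k + k'); split.
    by move=> i; rewrite !mxE; apply: rpredD.
  by rewrite mulmxDl -Hk -Hk' addrA subrK.
Qed.

Canonical lat_equiv (B : 'M[R]_d) := EquivRelPack (lat_rel_equiv B).

Definition torus (B : 'M[R]_d) : Type :=
  quotient_topology {eq_quot lat_equiv B}.

Definition torus_pi (B : 'M[R]_d) : 'rV[R]_d -> torus B :=
  fun x => \pi_(torus B) x.

End Defs.

(* Let D be the lattice spanned by B and M the closure of L + D x {0} in R^d x H.
   M is a closed subgroup, and it projects onto H because pi^H(L) is dense and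
   every coset of D meets a fixed compact ball. Its fibre C over 0 is a closed
   subgroup of R^d containing D. If C were proper, a Kronecker-type argument
   (take a maximal subspace V inside C; C is discrete in a complement W, and
   Dirichlet approximation bounds the denominators of the coordinates of C on a
   basis of W made of projected lattice vectors) gives x <> 0 with <x, C> in Z.
   Then h |-> e(-<x, g>) for any (g, h) in M is a well-defined continuous
   character eta of H with (x, eta) in L°, and x lies in D°, contradicting
   D° /\ pi(L°) = {0}. So C = R^d, i.e. L + D x {0} is dense in R^d x H, which
   gives the density of psi(Lambda_U); injectivity of psi on pi^G(L) is the
   hypothesis D /\ pi^G(L) = {0}. *)

From HB Require Import structures.
From mathcomp Require Import all_boot all_order all_algebra.
From mathcomp Require Import all_classical all_reals all_analysis.
From mathcomp Require Import complex generic_quotient.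
From mathcomp Require Import ring lra.
Set Implicit Arguments.
Unset Strict Implicit.
Unset Printing Implicit Defensive.
Import Order.TTheory GRing.Theory Num.Theory.
Import numFieldNormedType.Exports.
Local Open Scope classical_set_scope.
Local Open Scope ring_scope.

Section MatrixNorm.
Variable R : realType.

Definition mx_abs_sum m n (M : 'M[R]_(m, n)) : R := \sum_i \sum_j `|M i j|.

Lemma mx_abs_sum_ge0 m n (M : 'M[R]_(m, n)) : 0 <= mx_abs_sum M.
Proof. by apply: sumr_ge0 => i _; apply: sumr_ge0. Qed.

Lemma mx_norm_entry_le m n (M : 'M[R]_(m, n)) i j : `|M i j| <= `|M|.
Proof.
change (`|M i j| <= mx_norm M); rewrite mx_normrE.
exact: (le_bigmax _ (fun ij : 'I_m * 'I_n => `|M ij.1 ij.2|) (i, j)).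
Qed.

Lemma mx_norm_le m n (M : 'M[R]_(m, n)) r :
  0 <= r -> (forall i j, `|M i j| <= r) -> `|M| <= r.
Proof.
by move=> r0 HM; change (mx_norm M <= r); rewrite mx_normrE; apply: bigmax_le.
Qed.

Lemma mulmx_norm_le m n (u : 'rV[R]_m) (M : 'M[R]_(m, n)) :
  `|u *m M| <= mx_abs_sum M * `|u|.
Proof.
apply: mx_norm_le => [|i j]; first exact: mulr_ge0 (mx_abs_sum_ge0 M) _.
rewrite mxE; apply: le_trans (ler_norm_sum _ _ _) _.
rewrite mulr_suml; apply: ler_sum => k _; rewrite normrM mulrC.
apply: ler_pM => //; last exact: mx_norm_entry_le.
by rewrite (bigD1 j) //= ler_wpDr //; apply: sumr_ge0.
Qed.

Lemma lipschitz_level_set_closed m (V : normedModType R)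
    (f : 'rV[R]_m -> V) (c : V) (k : R) :
  (forall u v, `|f u - f v| <= k * `|u - v|) -> closed [set u | f u = c].
Proof.
move=> f_lip p p_cl; apply/eqP; rewrite -subr_eq0 -normr_eq0 eq_le normr_ge0 andbT.
apply/ler_addgt0Pr => e e0; rewrite add0r.
have k1 : 0 < `|k| + 1 by rewrite ltr_wpDl.
have [q [/= <- pq]] := p_cl _ (nbhsx_ballx p _ (divr_gt0 e0 k1)).
apply: le_trans (f_lip _ _) _; move: pq; rewrite -ball_normE /= => /ltW pq.
apply: le_trans (ler_wpM2r (normr_ge0 _) (ler_norm k)) _.
apply: le_trans (ler_wpM2l (normr_ge0 _) pq) _.
rewrite mulrCA ger_pMr ?ler_pdivrMr // ?mul1r ?lerDl //.
Qed.

Lemma compact_norm_le m (A : set 'rV[R]_m) r :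
  closed A -> (forall x, A x -> `|x| <= r) -> compact A.
Proof.
move=> A_cl A_le; apply: bounded_closed_compact => //.
exists r; split; first exact: num_real.
by move=> M rM x Ax; apply: le_trans (A_le x Ax) (ltW rM).
Qed.

Lemma compact_norm_ball m r : compact [set v : 'rV[R]_m | `|v| <= r].
Proof.
apply: (@compact_norm_le _ _ r) => //.
have -> : [set v : 'rV[R]_m | `|v| <= r] = closed_ball_ Num.norm 0 r.
  by apply/seteqP; split=> v; rewrite /closed_ball_ /= sub0r normrN.
exact: closed_closed_ball_.
Qed.

End MatrixNorm.

Section Inner.
Variables (R : realType) (d : nat).
Implicit Types x y z : 'rV[R]_d.

Lemma innerC x y : inner x y = inner y x.
Proof. by apply: eq_bigr => i _; rewrite mulrC. Qed.

Lemma inner0r x : inner x 0 = 0.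
Proof. by rewrite /inner big1 // => i _; rewrite mxE mulr0. Qed.

Lemma innerDr x y z : inner x (y + z) = inner x y + inner x z.
Proof. by rewrite /inner -big_split; apply: eq_bigr => i _; rewrite mxE mulrDr. Qed.

Lemma innerNr x y : inner x (- y) = - inner x y.
Proof. by rewrite /inner -sumrN; apply: eq_bigr => i _; rewrite mxE mulrN. Qed.

Lemma innerBr x y z : inner x (y - z) = inner x y - inner x z.
Proof. by rewrite innerDr innerNr. Qed.

Lemma innerMnl x y n : inner (x *+ n) y = inner x y *+ n.
Proof.
rewrite /inner -sumrMnl; apply: eq_bigr => i _.
by rewrite mulmxnE mulrnAl.
Qed.

Lemma inner_trmx_col n (M : 'M[R]_(d, n)) j y :
  inner (col j M)^T y = (y *m M) 0 j.
Proof. by rewrite innerC mxE; apply: eq_bigr => i _; rewrite !mxE. Qed.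

Lemma inner_norm_le x y : `|inner x y| <= mx_abs_sum x * `|y|.
Proof.
apply: le_trans (ler_norm_sum _ _ _) _; rewrite /mx_abs_sum big_ord1 mulr_suml.
by apply: ler_sum => i _; rewrite normrM ler_wpM2l // mx_norm_entry_le.
Qed.

End Inner.

Section Expi.
Variable R : realType.
Implicit Types s t : R.

Lemma expiD s t : expi (s + t) = expi s * expi t.
Proof. by rewrite /expi mulrDr cosD sinD; congr Complex; ring. Qed.

Lemma expi0 : expi 0 = 1 :> R[i].
Proof. by rewrite /expi mulr0 cos0 sin0. Qed.

Lemma expiNK t : expi (- t) * expi t = 1.
Proof. by rewrite -expiD addNr expi0. Qed.

Lemma norm_expi t : `|expi t| = 1.
Proof. by rewrite normc_def /= cos2Dsin2 sqrtr1. Qed.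

Lemma expi_nat n : expi (n%:R : R) = 1.
Proof.
elim: n => [|n IHn]; first exact: expi0.
by rewrite -natr1 expiD IHn mul1r /expi mulr1 mulrC mulr_natr cos2pi sin2pi.
Qed.

Lemma expi_int t : t \is a Num.int -> expi t = 1.
Proof.
case/intrP=> [[n|n] ->]; first by rewrite -pmulrn expi_nat.
by rewrite NegzE mulrNz -(expiNK (n.+1)%:~R) -pmulrn expi_nat mulr1.
Qed.

Lemma continuous_expi :
  continuous (fun t => (complex.Re (expi t), complex.Im (expi t))).
Proof.
have lin : continuous (fun t : R => 2 * trigo.pi * t).
  by move=> t; exact: mulrl_continuous.
move=> t A [[A1 A2] /= [A1t A2t] sA].
have c1 : nbhs t ((fun s => cos (2 * trigo.pi * s)) @^-1` A1).
  exact: continuous_comp (lin t) (@continuous_cos _ _) _ A1t.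
have c2 : nbhs t ((fun s => sin (2 * trigo.pi * s)) @^-1` A2).
  exact: continuous_comp (lin t) (@continuous_sin _ _) _ A2t.
by apply: filterS (filterI c1 c2) => s [s1 s2]; exact: (sA (_, _)).
Qed.

End Expi.

Section Dirichlet.
Variable R : realType.

Definition fract (z : R) : R := z - (Num.floor z)%:~R.

Lemma fract_ge0 z : 0 <= fract z.
Proof. by rewrite subr_ge0 floor_le. Qed.

Lemma fract_lt1 z : fract z < 1.
Proof. by rewrite ltrBlDr addrC; have := floorD1_gt z; rewrite intrD. Qed.

Lemma truncn_scale_lt (z : R) K :
  (0 < K)%N -> 0 <= z < 1 -> (Num.truncn (z * K%:R) < K)%N.
Proof.
move=> K0 /andP[z0 z1]; rewrite truncn_lt_nat ?mulr_ge0 //.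
by rewrite gtr_pMl ?ltr0n.
Qed.

Lemma eq_truncn_scale_dist (z1 z2 : R) K : (0 < K)%N -> 0 <= z1 -> 0 <= z2 ->
  Num.truncn (z1 * K%:R) = Num.truncn (z2 * K%:R) -> `|z1 - z2| <= K%:R^-1.
Proof.
move=> K0 z10 z20 eq12; have K0' : (0 : R) < K%:R by rewrite ltr0n.
have /andP[lo1 hi1] := truncn_itv (mulr_ge0 z10 (ltW K0')).
have /andP[lo2 hi2] := truncn_itv (mulr_ge0 z20 (ltW K0')).
rewrite eq12 in lo1 hi1; rewrite -natr1 in hi1 hi2.
rewrite -(ler_pM2r K0') mulVf ?gt_eqF // -(ger0_norm (ltW K0')) -normrM mulrBl.
by rewrite ler_norml; apply/andP; split; lra.
Qed.

Lemma dirichlet_approx r (t : 'rV[R]_r) K :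
  exists q : nat, [/\ (0 < q)%N, (q <= K.+1 ^ r)%N & exists2 k : 'rV[R]_r,
    forall i, k 0 i \is a Num.int & forall i, `|t 0 i *+ q - k 0 i| <= K.+1%:R^-1].
Proof.
pose cell (m : 'I_(K.+1 ^ r).+1) : {ffun 'I_r -> 'I_K.+1} :=
  [ffun i => inord (Num.truncn (fract (t 0 i *+ m) * K.+1%:R))].
have [m1 [m2 [cell12 m12]]] : exists m1 m2, cell m1 = cell m2 /\ (m1 < m2)%N.
  apply: contrapT => no_coll.
  suff /leq_card : injective cell by rewrite card_ffun !card_ord ltnn.
  move=> m1 m2 cell12; apply/val_inj/eqP; case: ltngtP => // m12; case: no_coll.
    by exists m1, m2.
  by exists m2, m1.
exists (m2 - m1)%N; split; [by rewrite subn_gt0 | | ].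
  by rewrite (leq_trans (leq_subr _ _)) // -ltnS.
exists (\row_i ((Num.floor (t 0 i *+ m2))%:~R - (Num.floor (t 0 i *+ m1))%:~R)).
  by move=> i; rewrite mxE rpredB // intr_int.
move=> i; rewrite mxE mulrnBr ?(ltnW m12) //.
have -> : t 0 i *+ m2 - t 0 i *+ m1 - ((Num.floor (t 0 i *+ m2))%:~R -
    (Num.floor (t 0 i *+ m1))%:~R) = fract (t 0 i *+ m2) - fract (t 0 i *+ m1).
  by rewrite /fract; ring.
apply: eq_truncn_scale_dist; rewrite ?fract_ge0 //.
have := congr1 (fun f : {ffun 'I_r -> 'I_K.+1} => val (f i)) cell12.
rewrite /= !ffunE.
by rewrite !inordK ?truncn_scale_lt ?fract_ge0 ?fract_lt1.
Qed.

End Dirichlet.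

Section SetSubgroup.
Variables (V : zmodType) (S : set V).
Hypotheses (S0 : S 0) (SB : forall a b, S a -> S b -> S (a - b)).

Lemma set_subgroupN a : S a -> S (- a).
Proof. by move=> Sa; rewrite -sub0r; apply: SB. Qed.

Lemma set_subgroupD a b : S a -> S b -> S (a + b).
Proof. by move=> Sa Sb; rewrite -[b]opprK; apply/SB/set_subgroupN. Qed.

Lemma set_subgroupMn a n : S a -> S (a *+ n).
Proof.
by move=> Sa; elim: n => [|n IHn]; rewrite ?mulr0n // mulrS; apply: set_subgroupD.
Qed.

Lemma set_subgroupMz a z : S a -> S (a *~ z).
Proof.
move=> Sa; case: z => n; first by rewrite -pmulrn; apply: set_subgroupMn.
by rewrite NegzE mulrNz -pmulrn; apply/set_subgroupN/set_subgroupMn.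
Qed.

Lemma set_subgroup_sum (I : finType) (F : I -> V) : (forall i, S (F i)) -> S (\sum_i F i).
Proof. by move=> SF; apply: big_ind => //; apply: set_subgroupD. Qed.

End SetSubgroup.

Section IntCombination.
Variables (R : realType) (d : nat) (S : set 'rV[R]_d).
Hypotheses (S0 : S 0) (SB : forall a b, S a -> S b -> S (a - b)).

Lemma set_subgroup_intZ a z : S a -> z \is a Num.int -> S (z *: a).
Proof. by move=> Sa /intrP[n ->]; rewrite scaler_int; apply: set_subgroupMz. Qed.

Lemma set_subgroup_int_comb n (k : 'rV[R]_n) (A : 'M[R]_(n, d)) :
  (forall i, k 0 i \is a Num.int) -> (forall i, S (row i A)) -> S (k *m A).
Proof.
move=> kZ SA; rewrite mulmx_sum_row.
by apply: set_subgroup_sum => // i; apply: set_subgroup_intZ.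
Qed.

End IntCombination.

Section Lattice.
Variables (R : realType) (d : nat) (B : 'M[R]_d).

Lemma lattice_of0 : lattice_of B 0.
Proof. by exists 0; split=> [i|]; rewrite ?mxE ?mul0mx. Qed.

Lemma lattice_ofB a b : lattice_of B a -> lattice_of B b -> lattice_of B (a - b).
Proof.
move=> [k [kZ ->]] [k' [k'Z ->]]; exists (k - k'); split; last by rewrite mulmxBl.
by move=> i; rewrite !mxE rpredB.
Qed.

Lemma lattice_of_row i : lattice_of B (row i B).
Proof.
exists 'e_i; split; last exact: rowE.
by move=> j; rewrite mxE; case: (_ == _); rewrite ?rpred0 ?rpred1.
Qed.

Lemma lattice_reduce g : B \in unitmx ->
  exists2 v, lattice_of B v & `|g + v| <= mx_abs_sum B.
Proof.
move=> Bu; pose y := g *m invmx B; pose k : 'rV[R]_d := \row_i (Num.floor (y 0 i))%:~R.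
exists (- (k *m B)).
  by exists (- k); split=> [i|]; rewrite ?mulNmx // !mxE rpredN intr_int.
have -> : g - k *m B = (y - k) *m B by rewrite mulmxBl mulmxKV.
apply: (le_trans (mulmx_norm_le _ _)); rewrite -[leRHS]mulr1.
rewrite ler_wpM2l ?mx_abs_sum_ge0 //; apply: mx_norm_le => // i j.
rewrite (ord1 i) !mxE -/(fract _).
by rewrite ger0_norm ?fract_ge0 // ltW ?fract_lt1.
Qed.

Local Open Scope quotient_scope.

Lemma torus_piP x y : torus_pi B x = torus_pi B y <-> lattice_of B (x - y).
Proof.
have /(_ x y) eqP := @eqquotP _ _ {eq_quot lat_equiv B}.
by split=> [/eqP/asboolP | ?]; last apply/eqP/asboolP.
Qed.

End Lattice.

Section Kronecker.
Variables (R : realType) (d : nat) (C : set 'rV[R]_d) (B : 'M[R]_d).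
Hypotheses (C_closed : closed C) (C0 : C 0)
  (CB : forall a b, C a -> C b -> C (a - b))
  (B_unit : B \in unitmx) (C_lattice : lattice_of B `<=` C).

Definition subspace_in (V : 'M[R]_d) := forall v : 'rV_d, (v <= V)%MS -> C v.

Definition limit_direction (u : 'rV[R]_d) := forall e1 e2, 0 < e1 -> 0 < e2 ->
  exists w, [/\ C w, w != 0, `|w| < e1 & `|u - `|w|^-1 *: w| < e2].

Lemma exists_max_subspace_in :
  exists2 V, subspace_in V & forall V', subspace_in V' -> (\rank V' <= \rank V)%N.
Proof.
pose P n := `[< exists2 V, subspace_in V & \rank V = n >].
have P0 : exists n, P n.
  by exists 0%N; apply/asboolP; exists 0; rewrite ?mxrank0 // => v /submx0null ->.
have P_le n : P n -> (n <= d)%N by move=> /asboolP[V _ <-]; apply: rank_leq_col.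
case: (ex_maxnP P0 P_le) => n /asboolP[V V_in <-] V_max.
by exists V => // V' V'_in; apply: V_max; apply/asboolP; exists V'.
Qed.

(* Approximate t *: u by integer multiples of a tiny w of C pointing almost along u. *)
Lemma limit_direction_line u : limit_direction u -> forall t, C (t *: u).
Proof.
move=> u_lim t; apply: C_closed => N /nbhs_ballP[e e0 Ne].
have t1 : 0 < `|t| + 1 by rewrite ltr_wpDl.
have [w [Cw w0 w_small w_dir]] := u_lim (e / 2) (e / 2 / (`|t| + 1))
  (divr_gt0 e0 (ltr0Sn _ 1)) (divr_gt0 (divr_gt0 e0 (ltr0Sn _ 1)) t1).
have w_gt0 : 0 < `|w| by rewrite normr_gt0.
pose m := Num.floor (t / `|w|).
exists (m%:~R *: w); split; first exact: set_subgroup_intZ (intr_int _ _).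
apply: Ne; rewrite -ball_normE /=.
have -> : t *: u - m%:~R *: w = t *: (u - `|w|^-1 *: w) + fract (t / `|w|) *: w.
  by rewrite scalerBr scalerBl scalerA addrA subrK.
apply: le_lt_trans (ler_normD _ _) _; rewrite !normrZ (splitr e).
apply: ler_ltD.
  apply: le_trans (ler_wpM2l (normr_ge0 t) (ltW w_dir)) _.
  rewrite mulrCA ler_piMr ?divr_ge0 ?(ltW e0) //.
  by rewrite ler_pdivrMr // mul1r lerDl.
apply: le_lt_trans w_small.
by rewrite ger0_norm ?fract_ge0 // ler_piMl ?(ltW (fract_lt1 _)).
Qed.

(* Normalise the small elements of C in W: they cluster on the compact unit sphere
   of W. *)
Lemma exists_limit_direction (W : 'M[R]_d) :
  (forall e, 0 < e -> exists w, [/\ C w, (w <= W)%MS, w != 0 & `|w| < e]) ->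
  exists u, [/\ (u <= W)%MS, u != 0 & limit_direction u].
Proof.
move=> small.
pose S := [set u : 'rV[R]_d | `|u| = 1] `&` [set u | u *m cokermx W = 0].
have S_compact : compact S.
  apply: (@compact_norm_le _ _ _ 1); last by move=> x [/= -> _].
  apply: closedI.
    apply: (@lipschitz_level_set_closed _ _ _ (fun u : 'rV[R]_d => `|u|) 1 1) => u v.
    by rewrite mul1r ler_dist_dist.
  apply: (@lipschitz_level_set_closed _ _ _ (mulmx^~ (cokermx W)) 0
    (mx_abs_sum (cokermx W))) => u v.
  by rewrite -mulmxBl mulmx_norm_le.
pose dirs e := [set u | exists w, [/\ C w, (w <= W)%MS, w != 0, `|w| < e
  & u = `|w|^-1 *: w]].
pose F := filter_from [set e : R | 0 < e] dirs.
have F_proper : ProperFilter F.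
  apply: filter_from_proper => [|e e0]; last first.
    by have [w [? ? ? ?]] := small e e0; exists (`|w|^-1 *: w), w.
  apply: filter_from_filter => [|e1 e2 e10 e20]; first by exists 1; rewrite /= ltr01.
  exists (Num.min e1 e2); first by rewrite /= lt_min e10 e20.
  move=> u [w [? ? ? w_small ->]]; move: w_small; rewrite lt_min => /andP[? ?].
  by split; exists w.
have FS : F S.
  exists 1; first by rewrite /= ltr01.
  move=> u [w [_ wW w0 _ ->]]; split=> /=.
    by rewrite normrZ normfV normr_id mulVf // normr_eq0.
  by apply/eqP; rewrite -submxE scalemx_sub.
have [u [[/= u1 /eqP uW] u_cl]] := S_compact F F_proper FS.
exists u; split; first by rewrite submxE.
  by rewrite -normr_eq0 u1 oner_eq0.
move=> e1 e2 e10 e20.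
have [_ [[w [Cw _ w0 w_small ->]] w_dir]] :=
  u_cl _ _ (ex_intro2 _ _ e1 e10 (fun _ x => x)) (nbhsx_ballx u e2 e20).
by exists w; split=> //; move: w_dir; rewrite -ball_normE.
Qed.

(* By Dirichlet, some multiple [q <= (K+1)^r] of the coordinates of [a] lies within
   [1/(K+1)] of an integer vector; the corresponding element of C is too small to be
   nonzero. *)
Lemma coord_denominator r (A : 'M[R]_(r, d)) eps : 0 < eps -> row_free A ->
  (forall i, C (row i A)) ->
  (forall w, C w -> (w <= A)%MS -> `|w| < eps -> w = 0) ->
  exists2 N : nat, (0 < N)%N & forall a, C a -> (a <= A)%MS ->
    forall j, (a *m pinvmx A) 0 j *+ N \is a Num.int.
Proof.
move=> eps0 A_free CA A_discrete.
pose K := Num.truncn (mx_abs_sum A / eps).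
have K1_gt0 : (0 : R) < K.+1%:R by rewrite ltr0n.
have AK_lt : mx_abs_sum A * K.+1%:R^-1 < eps.
  by rewrite ltr_pdivrMr // mulrC -ltr_pdivrMr // truncnS_gt.
exists (K.+1 ^ r)`!; first exact: fact_gt0.
move=> a Ca aA j; set t := a *m pinvmx A.
have [q [q0 qK [k kZ k_close]]] := dirichlet_approx t K.
have tqk : t *+ q = k.
  apply: (row_free_inj A_free); apply/subr0_eq; rewrite -mulmxBl.
  apply: A_discrete; last 1 first.
  - apply: le_lt_trans (mulmx_norm_le _ _) _; apply: le_lt_trans AK_lt.
    rewrite ler_wpM2l ?mx_abs_sum_ge0 //.
    apply: mx_norm_le => [|i' i]; first by rewrite invr_ge0 ltW.
    by rewrite (ord1 i') !mxE mulmxnE.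
  - rewrite mulmxBl -scaler_nat -scalemxAl mulmxKpV // scaler_nat.
    by apply: CB; [apply: set_subgroupMn | apply: set_subgroup_int_comb].
  - exact: submxMl.
have qN : (q %| (K.+1 ^ r)`!)%N by apply: dvdn_fact; rewrite q0 qK.
by rewrite -(divnK qN) mulnC mulrnA -mulmxnE tqk rpredMn.
Qed.

Section MaxSubspace.
Variable V : 'M[R]_d.
Hypotheses (V_in : subspace_in V)
  (V_max : forall V', subspace_in V' -> (\rank V' <= \rank V)%N)
  (V_proper : (\rank V < d)%N).

Let W := (V^C)%MS.
Let P := proj_mx W V.

Let WV0 : (W :&: V)%MS = 0.
Proof. by rewrite capmxC capmx_compl. Qed.

Lemma C_proj c : C c -> C (c *m P).
Proof.
move=> Cc; have -> : c *m P = c - (c - c *m P) by rewrite opprB addrC subrK.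
apply: CB => //; apply/V_in/proj_mx_compl_sub/submx_full.
by rewrite addsmxC addsmx_compl_full.
Qed.

(* A line of C in W would enlarge the maximal subspace V. *)
Lemma C_discrete_compl :
  exists2 eps : R, 0 < eps & forall w, C w -> (w <= W)%MS -> `|w| < eps -> w = 0.
Proof.
apply: contrapT => not_discrete.
have [|u [uW u0 u_lim]] := @exists_limit_direction W.
  move=> e e0; apply: contrapT => no_small; apply: not_discrete.
  exists e => // w Cw wW we; apply: contrapT => /eqP w0; apply: no_small.
  by exists w.
have Vu_in : subspace_in (V + u)%MS.
  move=> v /sub_addsmxP[[a b] /= ->]; apply: set_subgroupD => //.
    exact/V_in/submxMl.
  by rewrite (mx11_scalar b) mul_scalar_mx; apply: limit_direction_line.
have [leVu eqVu] := mxrank_leqif_sup (addsmxSl V u).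
have uV : (u <= V)%MS.
  by apply: submx_trans (addsmxSr V u) _; rewrite -eqVu eqn_leq leVu V_max.
have : (u <= W :&: V)%MS by rewrite sub_capmx uW uV.
by rewrite WV0 submx0 (negbTE u0).
Qed.

Lemma compl_basis_in : exists r (A : 'M[R]_(r, d)),
  [/\ (0 < r)%N, row_free A, (A == W)%MS & forall i, C (row i A)].
Proof.
pose BP := B *m P.
have WBP : (W <= BP)%MS.
  have -> : W = W *m invmx B *m BP.
    by rewrite mulmxA -(mulmxA W) mulVmx // mulmx1 proj_mx_id.
  exact: submxMl.
exists (\rank BP), (rowsub (maxrankfun BP) BP); split.
- by apply: leq_trans (mxrankS WBP); rewrite mxrank_compl subn_gt0.
- exact: maxrowsub_free.
- by rewrite !(eq_maxrowsub BP) proj_mx_sub.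
- move=> i; rewrite row_rowsub row_mul; apply: C_proj; apply: C_lattice.
  exact: lattice_of_row.
Qed.

End MaxSubspace.

Theorem kronecker : (exists y, ~ C y) ->
  exists2 x, x != 0 & forall c, C c -> inner x c \is a Num.int.
Proof.
move=> [y Cy]; have [V V_in V_max] := exists_max_subspace_in.
have V_proper : (\rank V < d)%N.
  rewrite ltnNge; apply/negP => V_full; apply/Cy/V_in/submx_full.
  by rewrite /row_full eqn_leq rank_leq_col.
have [eps eps0 W_discrete] := C_discrete_compl V_in V_max.
have [r [A [r0 A_free /andP[AW WA] CA]]] := compl_basis_in V_in V_proper.
have [N N0 N_coord] := coord_denominator eps0 A_free CA
  (fun w Cw wA => W_discrete w Cw (submx_trans wA AW)).
pose j0 : 'I_r := Ordinal r0.
(* N times the j0-th coordinate, in the basis A of W, of the projection onto W along V. *)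
pose x := (col j0 (proj_mx V^C%MS V *m pinvmx A))^T *+ N.
have x_row : inner x (row j0 A) = N%:R.
  have rowA : (row j0 A <= A)%MS := row_sub j0 A.
  have rowA_coord : row j0 A *m pinvmx A = 'e_j0.
    by apply: (row_free_inj A_free); rewrite mulmxKpV // rowE.
  rewrite innerMnl inner_trmx_col mulmxA proj_mx_id ?(submx_trans rowA) //.
    by rewrite rowA_coord !mxE !eqxx.
  by rewrite capmxC capmx_compl.
exists x.
  apply: contraTneq N0 => x0; move: x_row.
  by rewrite x0 innerC inner0r => /eqP; rewrite eq_sym pnatr_eq0 => /eqP ->.
move=> c Cc; rewrite innerMnl inner_trmx_col mulmxA.
by apply: N_coord; [exact: C_proj | exact: submx_trans (proj_mx_sub _ _ _) WA].
Qed.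

End Kronecker.

Section TopologicalZmod.
Variable H : topologicalZmodType.

Lemma nbhs_sub_split (h h' : H) N : nbhs (h - h') N -> exists N1 N2,
  [/\ nbhs h N1, nbhs h' N2 & forall a b, N1 a -> N2 b -> N (a - b)].
Proof.
move=> /(@sub_continuous H (h, h')) [[N1 N2] /= [N1h N2h] N12].
by exists N1, N2; split=> // a b N1a N2b; exact: (N12 (a, b)).
Qed.

Lemma nbhs_add_split (h h' : H) N : nbhs (h + h') N -> exists N1 N2,
  [/\ nbhs h N1, nbhs h' N2 & forall a b, N1 a -> N2 b -> N (a + b)].
Proof.
move=> /(@add_continuous H (h, h')) [[N1 N2] /= [N1h N2h] N12].
by exists N1, N2; split=> // a b N1a N2b; exact: (N12 (a, b)).
Qed.

Lemma dense_nbhs_meet (S : set H) (h : H) N :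
  dense S -> nbhs h N -> exists2 s, S s & N s.
Proof.
move=> S_dense; rewrite (@nbhsE H h); case=> O [open_O Oh] ON.
have [s [Os Ss]] := S_dense O (ex_intro _ h Oh) open_O.
by exists s => //; apply: ON.
Qed.

End TopologicalZmod.

Section LDClosure.
Variables (R : realType) (d : nat) (H : topologicalZmodType).
Variables (L : set ('rV[R]_d * H)) (B : 'M[R]_d).
Hypotheses (L0 : L 0) (LB : forall a b, L a -> L b -> L (a - b))
  (L_dense : dense [set h | exists l, L l /\ l.2 = h]) (B_unit : B \in unitmx).

(* (g, h) lies in the closure of L + D x {0}, where D is the lattice spanned by B. *)
Definition LD_closure (g : 'rV[R]_d) (h : H) :=
  forall e, 0 < e -> forall N, nbhs h N ->
    exists l, [/\ L l, N l.2 & exists2 v, lattice_of B v & `|l.1 + v - g| < e].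

Lemma LD_closure_L l : L l -> LD_closure l.1 l.2.
Proof.
move=> Ll e e0 N Nl; exists l; split=> //; first exact: nbhs_singleton.
by exists 0; [exact: lattice_of0 | rewrite addr0 subrr normr0].
Qed.

Lemma LD_closure_lattice v : lattice_of B v -> LD_closure v 0.
Proof.
move=> Dv e e0 N N0; exists 0; split=> //; first exact: nbhs_singleton.
by exists v; rewrite // add0r subrr normr0.
Qed.

Lemma LD_closureB g h g' h' :
  LD_closure g h -> LD_closure g' h' -> LD_closure (g - g') (h - h').
Proof.
move=> gh g'h' e e0 N /nbhs_sub_split[N1 [N2 [N1h N2h' N12]]].
have e2 : 0 < e / 2 by rewrite divr_gt0.
have [l [Ll N1l [v Dv lv]]] := gh _ e2 _ N1h.
have [l' [Ll' N2l' [v' Dv' l'v']]] := g'h' _ e2 _ N2h'.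
exists (l - l'); split; [exact: LB | exact: N12 | exists (v - v')].
  exact: lattice_ofB.
have -> : (l - l').1 + (v - v') - (g - g') = (l.1 + v - g) - (l'.1 + v' - g').
  by rewrite /=; apply/rowP => i; rewrite !mxE; ring.
by apply: le_lt_trans (ler_normB _ _) _; rewrite (splitr e) ltrD.
Qed.

Lemma LD_closure0 : LD_closure 0 0.
Proof. exact: LD_closure_L L0. Qed.

Lemma LD_closureN g h : LD_closure g h -> LD_closure (- g) (- h).
Proof. by move/(LD_closureB LD_closure0); rewrite !sub0r. Qed.

Lemma LD_closureD g h g' h' :
  LD_closure g h -> LD_closure g' h' -> LD_closure (g + g') (h + h').
Proof. by move=> gh /LD_closureN/(LD_closureB gh); rewrite !opprK. Qed.

Lemma LD_closure_approx g h : (forall e, 0 < e -> forall N, nbhs h N ->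
  exists g' h', [/\ `|g' - g| < e, N h' & LD_closure g' h']) -> LD_closure g h.
Proof.
move=> approx e e0 N; rewrite (@nbhsE H h); case=> O [open_O Oh] ON.
have e2 : 0 < e / 2 by rewrite divr_gt0.
have [g' [h' [gg' Oh' g'h']]] := approx _ e2 O (open_nbhs_nbhs (conj open_O Oh)).
have [l [Ll Ol [v Dv lv]]] := g'h' _ e2 O (open_nbhs_nbhs (conj open_O Oh')).
exists l; split; [by [] | exact: ON | exists v => //].
have -> : l.1 + v - g = (l.1 + v - g') + (g' - g) by rewrite addrA subrK.
by apply: le_lt_trans (ler_normD _ _) _; rewrite (splitr e) ltrD.
Qed.

Lemma closed_LD_closure_fiber0 : closed [set g | LD_closure g 0].
Proof.
move=> g g_cl; apply: LD_closure_approx => e e0 N N0.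
have [g' [/= g'0 gg']] := g_cl _ (nbhsx_ballx g _ e0).
exists g', 0; split=> //; last exact: nbhs_singleton.
by move: gg'; rewrite -ball_normE /= distrC.
Qed.

(* Reducing modulo D keeps the first coordinates in a compact ball, where they cluster. *)
Lemma LD_closure_cluster h (P : H -> Prop) :
  (forall N, nbhs h N -> exists g' h', [/\ N h', P h' & LD_closure g' h']) ->
  exists2 g, LD_closure g h & forall e, 0 < e ->
    exists g' h', [/\ P h', LD_closure g' h' & `|g' - g| < e].
Proof.
move=> hP; pose rho := mx_abs_sum B.
pose lifts N := [set f | `|f| <= rho /\ exists h', [/\ N h', P h' & LD_closure f h']].
pose F := filter_from (nbhs h) lifts.
have F_proper : ProperFilter F.
  apply: filter_from_proper => [|N hN]; last first.
    have [g' [h' [Nh' Ph' g'h']]] := hP N hN.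
    have [v Dv v_le] := lattice_reduce g' B_unit.
    exists (g' + v); split=> //; exists h'; split=> //.
    by rewrite -[h']addr0; apply: LD_closureD (LD_closure_lattice Dv).
  apply: filter_from_filter => [|N1 N2 N1h N2h]; first by exists setT; apply: filterT.
  exists (N1 `&` N2); first exact: filterI.
  by move=> f [f_le [h' [[N1h' N2h'] Ph' fh']]]; split; split=> //; exists h'.
have F_ball : F [set f | `|f| <= rho] by exists setT; [apply: filterT | move=> f []].
have [g [_ g_cl]] := compact_norm_ball F_proper F_ball.
have near_g N e : nbhs h N -> 0 < e ->
    exists g' h', [/\ N h', P h', LD_closure g' h' & `|g' - g| < e].
  move=> hN e0.
  have [f [[_ [h' [Nh' Ph' fh']]] gf]] := g_cl _ _ (ex_intro2 _ _ N hN (fun _ x => x))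
    (nbhsx_ballx g e e0).
  by exists f, h'; split=> //; move: gf; rewrite -ball_normE /= distrC.
exists g => [|e e0].
  apply: LD_closure_approx => e e0 N hN.
  by have [g' [h' [? ? ? ?]]] := near_g N e hN e0; exists g', h'.
by have [g' [h' [? ? ? ?]]] := near_g setT e filterT e0; exists g', h'.
Qed.

Lemma LD_closure_total h : exists g, LD_closure g h.
Proof.
have [|g gh _] := @LD_closure_cluster h (fun _ => True); last by exists g.
move=> N /(dense_nbhs_meet L_dense)[h' [l [Ll <-]] Nl].
by exists l.1, l.2; split=> //; apply: LD_closure_L.
Qed.

Lemma LD_closure_inner_near x g0 h0 del : LD_closure g0 h0 -> 0 < del ->
  exists2 N, nbhs h0 N & forall h, N h ->
    exists2 g, LD_closure g h & `|inner x g - inner x g0| < del.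
Proof.
move=> g0h0 del0; apply: contrapT => not_near.
pose far h := forall g, LD_closure g h -> del <= `|inner x g - inner x g0|.
have [|gs gsh0 gs_lim] := @LD_closure_cluster h0 far.
  move=> N N0; apply: contrapT => no_far; apply: not_near; exists N => // h Nh.
  apply: contrapT => not_close; have [g gh] := LD_closure_total h.
  case: no_far; exists g, h; split=> // g' g'h; rewrite leNgt.
  by apply/negP => close; apply: not_close; exists g'.
pose cx := mx_abs_sum x.
have cx1 : 0 < cx + 1 by rewrite ltr_wpDl ?mx_abs_sum_ge0.
have [f [h [far_h fh f_gs]]] := gs_lim _ (divr_gt0 del0 cx1).
have fgh : LD_closure (f - gs + g0) h.
  by rewrite -[h](subrK h0); apply: LD_closureD (LD_closureB fh gsh0) g0h0.
move/(_ _ fgh): far_h; rewrite innerDr addrK leNgt => /negP; apply.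
apply: le_lt_trans (inner_norm_le _ _) _; rewrite -/cx.
apply: le_lt_trans (ler_wpM2l (mx_abs_sum_ge0 x) (ltW f_gs)) _.
by rewrite mulrCA gtr_pMr // ltr_pdivrMr // mul1r ltrDl ltr01.
Qed.

Section Character.
Variable x : 'rV[R]_d.
Hypothesis x_int : forall c, LD_closure c 0 -> inner x c \is a Num.int.

(* Well defined since two lifts of h differ by an element of the fibre over 0,
   on which x is integral. *)
Definition LD_char (h : H) : R[i] := expi (- inner x (xget 0 [set g | LD_closure g h])).

Lemma LD_charE g h : LD_closure g h -> LD_char h = expi (- inner x g).
Proof.
move=> gh; rewrite /LD_char; set g' := xget _ _.
have g'h : LD_closure g' h := xgetPex 0 (LD_closure_total h).
have := LD_closureB g'h gh; rewrite subrr => /x_int.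
rewrite innerBr -rpredN => /expi_int E.
have -> : - inner x g' = - (inner x g' - inner x g) - inner x g by ring.
by rewrite expiD E mul1r.
Qed.

Lemma LD_char_character : character LD_char.
Proof.
split=> [h0 A|h|a b].
- have [g0 g0h0] := LD_closure_total h0.
  pose phi (t : R) := (complex.Re (expi (- t)), complex.Im (expi (- t))).
  have phi_cont : continuous phi.
    move=> t; apply: (@continuous_comp _ _ _ -%R
      (fun t => (complex.Re (expi t), complex.Im (expi t)))).
      exact: opp_continuous.
    exact: continuous_expi.
  rewrite (LD_charE g0h0) -/(phi _) => /phi_cont/nbhs_ballP[del del0 A_ball].
  have [N N0 N_near] := LD_closure_inner_near x g0h0 del0.
  apply: filterS N0 => h /N_near[g gh g_near].
  change (A (complex.Re (LD_char h), complex.Im (LD_char h))).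
  rewrite (LD_charE gh) -/(phi _); apply: (A_ball (inner x g)).
  by rewrite -ball_normE /= distrC.
- by rewrite /LD_char norm_expi.
- have [ga gaa] := LD_closure_total a; have [gb gbb] := LD_closure_total b.
  rewrite (LD_charE gaa) (LD_charE gbb) (LD_charE (LD_closureD gaa gbb)).
  by rewrite innerDr opprD expiD.
Qed.

Lemma LD_char_annihilator : annihilator L (x, LD_char).
Proof.
split=> [|l Ll]; first exact: LD_char_character.
by rewrite /= (LD_charE (LD_closure_L Ll)) /charG mulrC expiNK.
Qed.

End Character.

Lemma LD_closure_fiber0_full :
  dual_lattice (lattice_of B) `&` proj_dualG L = [set 0] -> forall g, LD_closure g 0.
Proof.
move=> dual0 g; apply: contrapT => not_g.
have fiber0B a b : LD_closure a 0 -> LD_closure b 0 -> LD_closure (a - b) 0.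
  by move=> a0 /(LD_closureB a0); rewrite subrr.
have [x x0 x_int] := kronecker closed_LD_closure_fiber0 LD_closure0 fiber0B B_unit
  (fun v => @LD_closure_lattice v) (ex_intro _ g not_g).
have : (dual_lattice (lattice_of B) `&` proj_dualG L) x.
  split; last by exists (LD_char x); apply: LD_char_annihilator.
  by move=> v Dv; rewrite innerC; apply/x_int/LD_closure_lattice.
by rewrite dual0 => x_eq0; rewrite x_eq0 eqxx in x0.
Qed.

Lemma model_set_dense : (forall g, LD_closure g 0) ->
  forall U, open U -> U !=set0 -> dense (torus_pi B @` model_set L U).
Proof.
move=> full U U_open U_ne0 O [t Ot] O_open.
pose g0 := repr t.
have : nbhs g0 (torus_pi B @^-1` O).
  by apply: open_nbhs_nbhs; split; [exact: O_open | rewrite /= /torus_pi /g0 reprK].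
move=> /nbhs_ballP[e e0 g0_ball].
have [u [Uu [l0 [Ll0 l0u]]]] := L_dense U_ne0 U_open; subst u.
have [N1 [N2 [N10 N2l0 N12]]] : exists N1 N2, [/\ nbhs 0 N1, nbhs l0.2 N2 &
    forall a b, N1 a -> N2 b -> U (a + b)].
  by apply: nbhs_add_split; rewrite add0r; apply: open_nbhs_nbhs.
have [l [Ll N1l [v Dv lv]]] := full (g0 - l0.1) e e0 N1 N10.
exists (torus_pi B (l.1 + l0.1)); split.
  have -> : torus_pi B (l.1 + l0.1) = torus_pi B (l.1 + l0.1 + v).
    apply/torus_piP; rewrite opprD addNKr -sub0r.
    exact: lattice_ofB (lattice_of0 _) Dv.
  apply: g0_ball; rewrite -ball_normE /= distrC.
  suff -> : l.1 + l0.1 + v - g0 = l.1 + v - (g0 - l0.1) by [].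
  by apply/rowP => i; rewrite !mxE; ring.
exists (l.1 + l0.1) => //; exists (l + l0); split; first exact: set_subgroupD.
by split=> //; apply: N12 (nbhs_singleton N2l0).
Qed.

End LDClosure.

Lemma proj_G_model_setT (R : realType) d (H : topologicalZmodType)
    (L : set ('rV[R]_d * H)) : proj_G L = model_set L setT.
Proof.
by apply/seteqP; split=> g [l [Ll]]; [move=> <-; exists l | move=> [_ <-]; exists l].
Qed.

Lemma torus_pi_inj_proj_G (R : realType) d (H : topologicalZmodType)
    (L : set ('rV[R]_d * H)) (B : 'M[R]_d) :
  (forall a b, L a -> L b -> L (a - b)) -> lattice_of B `&` proj_G L = [set 0] ->
  forall x y, proj_G L x -> proj_G L y -> torus_pi B x = torus_pi B y -> x = y.
Proof.
move=> LB D_proj0 _ _ [lx [Llx <-]] [ly [Lly <-]] /torus_piP D_diff.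
have : (lattice_of B `&` proj_G L) (lx.1 - ly.1).
  by split=> //; exists (lx - ly); split=> //; apply: LB.
by rewrite D_proj0 => /eqP; rewrite subr_eq0 => /eqP.
Qed.

Theorem lemma6p2 (R : realType) (d : nat) (H : topologicalZmodType)
  (L : set ('rV[R]_d * H)) :
  cut_and_project_scheme L ->
  countable L -> countable (annihilator L) ->
  forall B : 'M[R]_d, B \in unitmx ->
  lattice_of B `&` proj_G L = [set 0] ->
  dual_lattice (lattice_of B) `&` proj_dualG L = [set 0] ->
  ((forall x y, proj_G L x -> proj_G L y ->
       torus_pi B x = torus_pi B y -> x = y) /\
   dense (torus_pi B @` proj_G L)) /\
  (forall U : set H, open U -> U !=set0 ->
     dense (torus_pi B @` model_set L U)).
Proof.
move=> [_ [L0 LB] _ _ [_ L_dense]] _ _ B B_unit D_proj0 dual0.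
have full := LD_closure_fiber0_full L0 LB L_dense B_unit dual0.
have model_dense := model_set_dense L0 LB L_dense full.
split; [split | exact: model_dense].
- exact: torus_pi_inj_proj_G.
- by rewrite proj_G_model_setT; apply: model_dense; [exact: openT | exists 0].
Qed.
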